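(* Let $n\ge2$ and let $\mathrm{Alt}(n)$ act naturally on $X=\{1,\ldots,n\}$; this action is sharply $(n-2)$-transitive. Then this $\mathrm{Alt}(n)$-set can be sequenced if and only if $n$ is even. Moreover, when $n$ is even, every enumeration of $X$ is a sequencing.
   Context: $\mathrm{Alt}(n)$ is the group of even permutations of $\{1,\ldots,n\}$. For a group $G$ acting sharply $k$-transitively on an $n$-element set $X$ (for any two ordered $k$-tuples of distinct elements there is exactly one $g\in G$ mapping the first to the second coordinatewise), a sequencing of $X$ is an enumeration $(x_1,\ldots,x_n)$ of all elements of $X$ such that the $n-k$ tuples $(x_1,\ldots,x_{k+1}),(x_2,\ldots,x_{k+2}),\ldots,(x_{n-k},\ldots,x_n)$ lie in pairwise distinct orbits of $G$ acting coordinatewise on ordered $(k+1)$-tuples of distinct elements of $X$. Here $k=n-2$. *)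

From mathcomp Require Import all_boot all_fingroup.
From mathcomp Require Import alt.
Set Implicit Arguments. Unset Strict Implicit. Unset Printing Implicit Defensive.

Definition sharply_transitive (T : finType) (G : {set {perm T}}) (k : nat) :=
  forall t u : k.-tuple T, uniq t -> uniq u ->
    exists! g : {perm T}, g \in G /\ map g t = u.

Definition same_orbit (T : finType) (G : {set {perm T}}) (s t : seq T) :=
  exists2 g : {perm T}, g \in G & map g s = t.

(* the (k+1)-tuple (x_{i+1}, ..., x_{i+k+1}) of s = (x_1, ..., x_n), 0-based i *)
Definition window (T : Type) (k i : nat) (s : seq T) := take k.+1 (drop i s).

Definition enumeration (T : finType) (s : seq T) := perm_eq s (enum T).

Definition sequencing (T : finType) (G : {set {perm T}}) (k : nat) (s : seq T) :=
  enumeration s /\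
  forall i j, i < j -> j < size s - k ->
    ~ same_orbit G (window k i s) (window k j s).

From mathcomp Require Import all_boot all_fingroup.
From mathcomp Require Import alt primitive_action zify.
Set Implicit Arguments. Unset Strict Implicit. Unset Printing Implicit Defensive.

(* With k = n - 2 an enumeration (x_1, ..., x_n) has exactly two windows,
   (x_1, ..., x_(n-1)) and (x_2, ..., x_n).  A permutation is determined by its
   values at n - 1 points, so the only permutation mapping the first window to
   the second is the n-cycle (x_1 ... x_n), of sign (-1)^(n-1): the two windows
   lie in distinct Alt(n)-orbits exactly when n is even, whatever the
   enumeration.  Sharpness of the (n-2)-transitivity of Alt(n): two even
   permutations agreeing at n - 2 points differ by an even permutation moving
   at most two points, which is the identity. *)

Lemma fpath_map_belast (T : eqType) (f : T -> T) x p :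
  fpath f x p -> map f (belast x p) = p.
Proof. by elim: p x => //= y p IHp x /andP[/eqP-> /IHp->]. Qed.

Lemma take_size_belast (T : Type) (x : T) p :
  take (size p) (x :: p) = belast x p.
Proof. by rewrite lastI -cats1 take_size_cat ?size_belast. Qed.

Section PermAgreement.

Variable T : finType.
Local Open Scope group_scope.
Implicit Types (g h q : {perm T}) (A : {set T}).

Lemma perm_on_agree A g h : {in ~: A, g =1 h} -> perm_on A (g * h^-1).
Proof.
move=> gh; apply/subsetP => x; rewrite inE permM; apply: contraR => xA.
by rewrite gh ?inE // permK.
Qed.

Lemma eq_perm_off1 a g h : {in ~: [set a], g =1 h} -> g = h.
Proof.
move=> /perm_on_agree/perm_on_id; rewrite cards1 => /(_ isT)/eqP.
by rewrite -eq_mulgV1 => /eqP.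
Qed.

Lemma Alt_perm_on2 a b q : q \in 'Alt_T -> perm_on [set a; b] q -> q = 1.
Proof.
have [<-|nab] := eqVneq a b.
  by rewrite setUid => _ /perm_on_id ->; rewrite ?cards1.
have tperm_neq1 : tperm a b != 1.
  by apply: contraNneq nab => /permP/(_ a); rewrite perm1 tpermL => ->.
(* perm_on [set a; b] has 2! elements, hence is {1, tperm a b} *)
have sub12 : [set 1; tperm a b] \subset perm_on [set a; b].
  apply/subsetP => r; rewrite !inE => /orP[]/eqP->.
    exact: perm_on1.
  exact: tperm_on.
have card12 : #|[set 1; tperm a b]| = #|perm_on [set a; b]|.
  by rewrite card_perm cards2 cards2 nab eq_sym tperm_neq1.
have /(subset_cardP card12) eq12 := sub12.
move=> qA qon; have := eq12 q; rewrite [q \in perm_on _]qon !inE.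
case/orP=> /eqP // qt.
by move: qA; rewrite qt Alt_even odd_tperm nab.
Qed.

Lemma eq_Alt_off2 a b g h : g \in 'Alt_T -> h \in 'Alt_T ->
  {in ~: [set a; b], g =1 h} -> g = h.
Proof.
move=> gA hA /perm_on_agree/(Alt_perm_on2 (groupM gA (groupVr hA)))/eqP.
by rewrite -eq_mulgV1 => /eqP.
Qed.

End PermAgreement.

Lemma Alt_sharply_transitive (T : finType) : 1 < #|T| ->
  sharply_transitive ('Alt_T)%g (#|T| - 2).
Proof.
move=> T_gt1 t u Ut Uu.
have trAlt := Alt_trans T; rewrite -subn2 in trAlt.
have dtupleT (v : (#|T| - 2).-tuple T) :
    uniq v -> v \in (#|T| - 2).-dtuple(setT).
  by move=> Uv; rewrite inE Uv; apply/subsetP.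
have [g gA ->] := atransP2 trAlt (dtupleT _ Ut) (dtupleT _ Uu).
exists g; split=> // h [hA th].
have [a [b [_ tC]]] : exists a b, a != b /\ ~: [set x in t] = [set a; b].
  apply/cards2P; have := cardsC [set x in t].
  by rewrite cardsE (card_uniqP Ut) size_tuple; lia.
apply: (eq_Alt_off2 (a := a) (b := b) gA hA) => x; rewrite -tC !inE negbK => xt.
by move: x xt; apply/eq_in_map; rewrite th.
Qed.

Section CyclePerm.

Variable T : finType.

Definition cycle_perm (s : seq T) (Us : uniq s) : {perm T} :=
  perm (can_inj (prev_next Us)).

Lemma cycle_permE s (Us : uniq s) : cycle_perm Us =1 next s.
Proof. exact: permE. Qed.

Lemma map_cycle_perm_belast x p (Us : uniq (x :: p)) :
  map (cycle_perm Us) (belast x p) = p.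
Proof.
rewrite (eq_map (cycle_permE Us)); apply: fpath_map_belast.
by have := cycle_next Us; rewrite /= rcons_path => /andP[].
Qed.

Lemma odd_cycle_perm x p (Us : uniq (x :: p)) : (forall y, y \in x :: p) ->
  odd_perm (cycle_perm Us) = ~~ odd #|T|.
Proof.
move=> Ts; set c := cycle_perm Us.
have orbit_x : porbit c x = setT.
  apply/setP => y; rewrite inE; apply/porbitP.
  exists (findex (next (x :: p)) x y); rewrite permX (eq_iter (cycle_permE Us)).
  by rewrite iter_findex // (fconnect_cycle (cycle_next Us)) ?Ts.
have orbits_c : porbits c = [set setT].
  apply/setP => A; rewrite inE.
  apply/imsetP/eqP => [[y _ ->]|->]; last by exists x.
  by apply/eqP; rewrite -orbit_x eq_porbit_mem orbit_x inE.
by rewrite /odd_perm orbits_c cards1 addbT.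
Qed.

End CyclePerm.

Section AltSequencing.

Variable T : finType.

Lemma Alt_same_orbit_belast x p : enumeration (x :: p) ->
  same_orbit ('Alt_T)%g (belast x p) p <-> odd #|T|.
Proof.
move=> Es; have Us : uniq (x :: p) by rewrite (perm_uniq Es) enum_uniq.
have Ts y : y \in x :: p by rewrite (perm_mem Es) mem_enum.
have cA : (cycle_perm Us \in 'Alt_T)%g = odd #|T|.
  by rewrite Alt_even odd_cycle_perm // negbK.
split=> [[g gA gp]|oddT].
  suff gc : g = cycle_perm Us by rewrite -cA -gc.
  apply: (eq_perm_off1 (a := last x p)) => y; rewrite !inE => ylast.
  have : y \in belast x p.
    by move: (Ts y); rewrite lastI mem_rcons inE (negbTE ylast).
  by move: y {ylast}; apply/eq_in_map; rewrite gp map_cycle_perm_belast.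
by exists (cycle_perm Us); rewrite ?cA ?map_cycle_perm_belast.
Qed.

Lemma sequencing_Alt_even (s : seq T) : 1 < #|T| -> enumeration s ->
  sequencing ('Alt_T)%g (#|T| - 2) s <-> ~~ odd #|T|.
Proof.
move=> T_gt1 Es; have Ss : size s = #|T| by rewrite (perm_size Es) -cardE.
case: s Es Ss => [|x p] Es Ss; first by rewrite -Ss in T_gt1.
have k_eq : (#|T| - 2).+1 = size p by move: T_gt1; rewrite -Ss /=; lia.
have w0 : window (#|T| - 2) 0 (x :: p) = belast x p.
  by rewrite /window drop0 k_eq take_size_belast.
have w1 : window (#|T| - 2) 1 (x :: p) = p.
  by rewrite /window /= drop0 k_eq take_size.
have two : size (x :: p) - (#|T| - 2) = 2 by rewrite Ss; lia.
rewrite /sequencing two; split=> [[_ distinct]|evenT].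
  apply/negP => oddT; apply: (distinct 0 1) => //.
  by rewrite w0 w1; apply/Alt_same_orbit_belast.
split=> // i j ij j2; have -> : i = 0 by lia.
have -> : j = 1 by lia.
by rewrite w0 w1 => /(Alt_same_orbit_belast Es); rewrite (negbTE evenT).
Qed.

End AltSequencing.

Theorem theorem4p1 (n : nat) : 2 <= n ->
  sharply_transitive ('Alt_('I_n))%g (n - 2) /\
  ((exists s : seq 'I_n, sequencing ('Alt_('I_n))%g (n - 2) s) <-> ~~ odd n) /\
  (~~ odd n -> forall s : seq 'I_n, enumeration s ->
     sequencing ('Alt_('I_n))%g (n - 2) s).
Proof.
move=> n_ge2; have card_gt1 : 1 < #|'I_n| by rewrite card_ord.
have seqE s : enumeration s -> sequencing ('Alt_('I_n))%g (n - 2) s <-> ~~ odd n.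
  by move=> Es; have := sequencing_Alt_even card_gt1 Es; rewrite card_ord.
split; first by have := Alt_sharply_transitive card_gt1; rewrite card_ord.
split; last by move=> evenn s Es; apply/(seqE s Es).
split=> [[s seq_s]|evenn]; first exact/(seqE s (proj1 seq_s)).
by exists (enum 'I_n); apply/seqE => //; apply: perm_refl.
Qed.
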